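(* For a topological space $X$ the following are equivalent: (1) $X$ is quasi-Polish; (2) $X$ is homeomorphic to the subspace of non-compact elements of some $\omega$-continuous domain (with the Scott topology); (3) $X$ is homeomorphic to the subspace of non-compact elements of some $\omega$-algebraic domain (with the Scott topology).
   Context: In a poset $P$, $x\ll y$ ($x$ way below $y$) if for every directed $D\subseteq P$ with existing supremum $\bigsqcup D\sqsupseteq y$ there is $d\in D$ with $x\sqsubseteq d$; $x$ is compact if $x\ll x$. A dcpo is a poset in which every directed set has a supremum. An $\omega$-continuous domain is a dcpo with a countable subset $B$ such that for each $x$, $\{b\in B\mid b\ll x\}$ contains a directed subset with supremum $x$; it is $\omega$-algebraic if $B$ can be taken to consist of compact elements. The Scott topology consists of upper sets $U$ such that whenever a directed $D$ has $\bigsqcup D\in U$ then $D\cap U\neq\emptyset$. A quasi-metric on a set $X$ is a function $d\colon X\times X\to[0,\infty)$ with $x=y$ iff $d(x,y)=d(y,x)=0$ and $d(x,z)\le d(x,y)+d(y,z)$; it induces the topology generated by $B_d(x,\varepsilon)=\{y\mid d(x,y)<\varepsilon\}$; $\widehat d(x,y)=\max\{d(x,y),d(y,x)\}$. $(x_n)$ is Cauchy if for every $\varepsilon>0$ there is $n_0$ with $d(x_n,x_m)<\varepsilon$ for all $m\ge n\ge n_0$; $d$ is complete if every Cauchy sequence converges in the topology of $\widehat d$. A space is quasi-Polish if it is countably based and its topology is induced by a complete quasi-metric. *)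

From Stdlib Require Import Reals.
Open Scope R_scope.

Definition is_topology {T : Type} (O : (T -> Prop) -> Prop) : Prop :=
  O (fun _ => True) /\
  (forall U V, O U -> O V -> O (fun x => U x /\ V x)) /\
  (forall F : (T -> Prop) -> Prop,
      (forall U, F U -> O U) -> O (fun x => exists U, F U /\ U x)).

Definition generated_topology {T : Type} (S : (T -> Prop) -> Prop) (U : T -> Prop) : Prop :=
  forall O' : (T -> Prop) -> Prop, is_topology O' -> (forall V, S V -> O' V) -> O' U.

Definition countably_based {T : Type} (O : (T -> Prop) -> Prop) : Prop :=
  exists B : nat -> (T -> Prop),
    (forall n, O (B n)) /\
    (forall U, O U -> forall x, U x -> exists n, B n x /\ (forall y, B n y -> U y)).

Definition converges {T : Type} (O : (T -> Prop) -> Prop) (x : nat -> T) (l : T) : Prop :=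
  forall U, O U -> U l -> exists N, forall n, (N <= n)%nat -> U (x n).

Definition quasi_metric {T : Type} (d : T -> T -> R) : Prop :=
  (forall x y, 0 <= d x y) /\
  (forall x y, x = y <-> (d x y = 0 /\ d y x = 0)) /\
  (forall x y z, d x z <= d x y + d y z).

Definition balls {T : Type} (d : T -> T -> R) (U : T -> Prop) : Prop :=
  exists x eps, forall y, U y <-> d x y < eps.

Definition qm_topology {T : Type} (d : T -> T -> R) : (T -> Prop) -> Prop :=
  generated_topology (balls d).

Definition dhat {T : Type} (d : T -> T -> R) (x y : T) : R := Rmax (d x y) (d y x).

Definition cauchy {T : Type} (d : T -> T -> R) (x : nat -> T) : Prop :=
  forall eps, 0 < eps -> exists n0, forall n m, (n0 <= n)%nat -> (n <= m)%nat ->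
    d (x n) (x m) < eps.

Definition complete_qm {T : Type} (d : T -> T -> R) : Prop :=
  forall x : nat -> T, cauchy d x -> exists l, converges (qm_topology (dhat d)) x l.

Definition quasi_Polish {T : Type} (O : (T -> Prop) -> Prop) : Prop :=
  countably_based O /\
  exists d : T -> T -> R, quasi_metric d /\ complete_qm d /\
    (forall U, O U <-> qm_topology d U).

Definition partial_order {P : Type} (le : P -> P -> Prop) : Prop :=
  (forall x, le x x) /\
  (forall x y z, le x y -> le y z -> le x z) /\
  (forall x y, le x y -> le y x -> x = y).

Definition directed {P : Type} (le : P -> P -> Prop) (D : P -> Prop) : Prop :=
  (exists d, D d) /\
  (forall a b, D a -> D b -> exists c, D c /\ le a c /\ le b c).

Definition is_sup {P : Type} (le : P -> P -> Prop) (D : P -> Prop) (s : P) : Prop :=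
  (forall d, D d -> le d s) /\
  (forall u, (forall d, D d -> le d u) -> le s u).

Definition way_below {P : Type} (le : P -> P -> Prop) (x y : P) : Prop :=
  forall D s, directed le D -> is_sup le D s -> le y s -> exists d, D d /\ le x d.

Definition compact_el {P : Type} (le : P -> P -> Prop) (x : P) : Prop :=
  way_below le x x.

Definition dcpo {P : Type} (le : P -> P -> Prop) : Prop :=
  partial_order le /\ (forall D, directed le D -> exists s, is_sup le D s).

Definition countable_set {P : Type} (B : P -> Prop) : Prop :=
  exists e : nat -> option P, forall b, B b -> exists n, e n = Some b.

Definition omega_continuous {P : Type} (le : P -> P -> Prop) : Prop :=
  dcpo le /\
  exists B : P -> Prop, countable_set B /\
    forall x, exists D, (forall d, D d -> B d /\ way_below le d x) /\
                        directed le D /\ is_sup le D x.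

Definition omega_algebraic {P : Type} (le : P -> P -> Prop) : Prop :=
  dcpo le /\
  exists B : P -> Prop, countable_set B /\ (forall b, B b -> compact_el le b) /\
    forall x, exists D, (forall d, D d -> B d /\ way_below le d x) /\
                        directed le D /\ is_sup le D x.

Definition scott_open {P : Type} (le : P -> P -> Prop) (U : P -> Prop) : Prop :=
  (forall x y, U x -> le x y -> U y) /\
  (forall D s, directed le D -> is_sup le D s -> U s -> exists d, D d /\ U d).

(* (T, O) is homeomorphic to the subspace {p | p not compact} of P with the
   Scott topology: f is a bijection from T onto the non-compact elements and
   the opens of T are exactly the preimages of Scott-open sets. *)
Definition homeomorphic_to_noncompact {T P : Type} (O : (T -> Prop) -> Prop)
    (le : P -> P -> Prop) : Prop :=
  exists f : T -> P,
    (forall x y, f x = f y -> x = y) /\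
    (forall x, ~ compact_el le (f x)) /\
    (forall p, ~ compact_el le p -> exists x, f x = p) /\
    (forall U, O U <-> exists V, scott_open le V /\ forall x, U x <-> V (f x)).

From Stdlib Require Import Reals Lra Lia Wf_nat Classical ClassicalEpsilon
  FunctionalExtensionality PropExtensionality ProofIrrelevance Cantor.
Open Scope R_scope.

(* From a domain to a quasi-metric: enumerate a countable basis (b_l) of an
   omega-continuous domain.  A code [c] names a set W_c of indices, and
   d(p, q) = 2^-c for the least [c] such that p enters some Scott-open set
   {x | b_l << x} with l in W_c at a smaller index than q does.  Singleton codes make
   [d] induce the Scott topology.  A Cauchy sequence of non-compact elements determines
   the set of basis elements eventually way below its terms; the codes
   W_(i,j) = {l | b_i << b_l, b_j << b_l, b_l not below b_i} make this set directed
   with a non-compact supremum, which is the limit of the sequence.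

   From a quasi-metric to a domain: for a complete quasi-metric with dense centres c_i,
   the formal balls (i, k) of radius 2^-k, with (i, k) < (j, m) iff
   d(c_i, c_j) + 2^-m < 2^-k, form a countable preorder whose ideal completion is
   omega-algebraic.  Sending x to the balls containing it identifies the space with the
   non-compact ideals: a non-compact ideal contains a strictly increasing cofinal chain
   of balls, and completeness turns the chain of centres into the point it names. *)

Definition dyadic (k : nat) : R := (/2) ^ k.

Lemma dyadic_pos k : 0 < dyadic k.
Proof. apply pow_lt; lra. Qed.

Lemma dyadic_S k : dyadic (S k) = dyadic k / 2.
Proof. unfold dyadic; simpl; lra. Qed.

Lemma dyadic_le k m : (k <= m)%nat -> dyadic m <= dyadic k.
Proof.
  induction 1 as [|m _ IH]; [lra|].
  rewrite dyadic_S; pose proof (dyadic_pos m); lra.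
Qed.

Lemma dyadic_lt k m : (k < m)%nat -> dyadic m < dyadic k.
Proof.
  intros Hkm; apply Rle_lt_trans with (dyadic (S k)); [apply dyadic_le; lia|].
  rewrite dyadic_S; pose proof (dyadic_pos k); lra.
Qed.

Lemma dyadic_small eps : 0 < eps -> exists k, dyadic k < eps.
Proof.
  intros Heps; destruct (pow_lt_1_zero (/2) ltac:(rewrite Rabs_pos_eq; lra) eps Heps)
    as [k Hk].
  exists k; specialize (Hk k (le_n k)).
  rewrite Rabs_pos_eq in Hk; [exact Hk|apply Rlt_le, dyadic_pos].
Qed.

Lemma nat_least (P : nat -> Prop) :
  (exists n, P n) -> exists n, P n /\ forall m, P m -> (n <= m)%nat.
Proof.
  intros HP; destruct (dec_inh_nat_subset_has_unique_least_element P
    (fun n => classic (P n)) HP) as [n [Hn _]]; eauto.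
Qed.

Definition dyadic_inf (P : nat -> Prop) : R :=
  match excluded_middle_informative (exists c, P c) with
  | left H => dyadic (proj1_sig (constructive_indefinite_description _ (nat_least P H)))
  | right _ => 0
  end.

Lemma dyadic_infP P :
  (exists c, P c /\ (forall m, P m -> (c <= m)%nat) /\ dyadic_inf P = dyadic c) \/
  ((forall c, ~ P c) /\ dyadic_inf P = 0).
Proof.
  unfold dyadic_inf; destruct excluded_middle_informative as [H|H].
  - left; destruct constructive_indefinite_description as [c [Hc Hmin]]; eauto.
  - right; split; eauto.
Qed.

Lemma dyadic_inf_ge0 P : 0 <= dyadic_inf P.
Proof.
  destruct (dyadic_infP P) as [[c [_ [_ ->]]]|[_ ->]]; [apply Rlt_le, dyadic_pos|lra].
Qed.

Lemma dyadic_inf_eq0 P : dyadic_inf P = 0 <-> forall c, ~ P c.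
Proof.
  destruct (dyadic_infP P) as [[c [Hc [_ ->]]]|[H ->]]; split; auto.
  - pose proof (dyadic_pos c); lra.
  - intros Hn; exfalso; exact (Hn c Hc).
Qed.

Lemma dyadic_inf_ge P c : P c -> dyadic c <= dyadic_inf P.
Proof.
  intros Hc; destruct (dyadic_infP P) as [[c0 [_ [Hmin ->]]]|[H _]].
  - apply dyadic_le, Hmin, Hc.
  - exfalso; exact (H c Hc).
Qed.

Lemma dyadic_inf_lt P eps :
  0 < eps -> dyadic_inf P < eps <-> forall c, P c -> dyadic c < eps.
Proof.
  intros Heps; split.
  - intros Hlt c Hc; pose proof (dyadic_inf_ge P c Hc); lra.
  - intros H; destruct (dyadic_infP P) as [[c [Hc [_ ->]]]|[_ ->]]; auto.
Qed.

Lemma dyadic_inf_le_max (P Q S : nat -> Prop) :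
  (forall c, P c -> Q c \/ S c) -> dyadic_inf P <= Rmax (dyadic_inf Q) (dyadic_inf S).
Proof.
  intros HPQS; destruct (dyadic_infP P) as [[c [Hc [_ ->]]]|[_ ->]].
  - destruct (HPQS c Hc) as [H|H].
    + eapply Rle_trans, Rmax_l; apply dyadic_inf_ge, H.
    + eapply Rle_trans, Rmax_r; apply dyadic_inf_ge, H.
  - eapply Rle_trans, Rmax_l; apply dyadic_inf_ge0.
Qed.

Lemma dyadic_inf_le_lower P K :
  (forall c, P c -> (K < c)%nat) -> dyadic_inf P <= dyadic (S K).
Proof.
  intros H; destruct (dyadic_infP P) as [[c [Hc [_ ->]]]|[_ ->]].
  - apply dyadic_le, H, Hc.
  - apply Rlt_le, dyadic_pos.
Qed.

Lemma eventually_upto (Q : nat -> nat -> Prop) :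
  (forall c, exists N, forall n, (N <= n)%nat -> Q c n) ->
  forall K, exists N, forall n, (N <= n)%nat -> forall c, (c <= K)%nat -> Q c n.
Proof.
  intros HQ K; induction K as [|K [N1 H1]].
  - destruct (HQ 0%nat) as [N HN]; exists N; intros n Hn c Hc.
    replace c with 0%nat by lia; auto.
  - destruct (HQ (S K)) as [N2 H2]; exists (Nat.max N1 N2); intros n Hn c Hc.
    destruct (Nat.eq_dec c (S K)) as [->|Hne]; [apply H2|apply H1]; lia.
Qed.

Lemma pred_ext {T : Type} (U V : T -> Prop) : (forall x, U x <-> V x) -> U = V.
Proof.
  intros H; apply functional_extensionality; intros x.
  apply propositional_extensionality, H.
Qed.

Lemma generated_topology_is_topology {T : Type} (S : (T -> Prop) -> Prop) :
  is_topology (generated_topology S).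
Proof.
  split; [|split].
  - intros O' HO' _; apply HO'.
  - intros U V HU HV O' HO' HS; apply HO'; [apply HU|apply HV]; auto.
  - intros F HF O' HO' HS; apply HO'; intros U HU; apply HF; auto.
Qed.

Lemma generated_topology_sub {T : Type} (S : (T -> Prop) -> Prop) V :
  S V -> generated_topology S V.
Proof. intros HV O' _ HS; auto. Qed.

Lemma open_of_local {T : Type} (O : (T -> Prop) -> Prop) (U : T -> Prop) :
  is_topology O ->
  (forall x, U x -> exists V, O V /\ V x /\ forall y, V y -> U y) -> O U.
Proof.
  intros [_ [_ Hunion]] Hloc.
  replace U with (fun x => exists V, (O V /\ forall y, V y -> U y) /\ V x).
  - apply Hunion; intros V [HV _]; exact HV.
  - apply pred_ext; intros x; split.
    + intros [V [[_ HVU] Vx]]; auto.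
    + intros Ux; destruct (Hloc x Ux) as [V [HV [Vx HVU]]]; eauto.
Qed.

Definition triangle_ineq {T : Type} (d : T -> T -> R) : Prop :=
  forall x y z, d x z <= d x y + d y z.

Section QuasiMetricTopology.

Variables (T : Type) (d : T -> T -> R).
Hypothesis d_triangle : triangle_ineq d.

Lemma qm_open_ball U :
  qm_topology d U -> forall x, U x -> exists eps, 0 < eps /\ forall y, d x y < eps -> U y.
Proof.
  intros HU; apply HU.
  - split; [|split].
    + intros x _; exists 1; split; [lra|auto].
    + intros A B HA HB x [Ax Bx].
      destruct (HA x Ax) as [e1 [He1 H1]], (HB x Bx) as [e2 [He2 H2]].
      exists (Rmin e1 e2); split; [apply Rmin_glb_lt; auto|].
      intros y Hy; pose proof (Rmin_l e1 e2); pose proof (Rmin_r e1 e2).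
      split; [apply H1|apply H2]; lra.
    + intros F HF x [A [FA Ax]]; destruct (HF A FA x Ax) as [e [He H]].
      exists e; split; auto; intros y Hy; exists A; auto.
  - intros V [z [r Hzr]] x Vx; apply Hzr in Vx.
    exists (r - d z x); split; [lra|].
    intros y Hy; apply Hzr; pose proof (d_triangle z x y); lra.
Qed.

Lemma qm_open_of_balls U :
  (forall x, d x x = 0) ->
  (forall x, U x -> exists eps, 0 < eps /\ forall y, d x y < eps -> U y) ->
  qm_topology d U.
Proof.
  intros Hself Hballs; apply open_of_local; [apply generated_topology_is_topology|].
  intros x Ux; destruct (Hballs x Ux) as [e [He Hy]].
  exists (fun y => d x y < e); split; [|split; [rewrite Hself|]]; auto.
  apply generated_topology_sub; exists x, e; tauto.
Qed.

Lemma dhat_triangle : triangle_ineq (dhat d).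
Proof.
  intros x y z; unfold dhat.
  pose proof (d_triangle x y z); pose proof (d_triangle z y x).
  pose proof (Rmax_l (d x y) (d y x)); pose proof (Rmax_r (d x y) (d y x)).
  pose proof (Rmax_l (d y z) (d z y)); pose proof (Rmax_r (d y z) (d z y)).
  apply Rmax_lub; lra.
Qed.

End QuasiMetricTopology.

Lemma converges_dhat {T : Type} (d : T -> T -> R) (x : nat -> T) (l : T) :
  triangle_ineq d ->
  (forall eps, 0 < eps -> exists N, forall n, (N <= n)%nat -> dhat d l (x n) < eps) ->
  converges (qm_topology (dhat d)) x l.
Proof.
  intros Ht Hx U HU Ul.
  destruct (qm_open_ball _ _ (dhat_triangle _ _ Ht) U HU l Ul) as [e [He Hy]].
  destruct (Hx e He) as [N HN]; exists N; auto.
Qed.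

Definition basis {P : Type} (le : P -> P -> Prop) (B : P -> Prop) : Prop :=
  forall x, exists D, (forall d, D d -> B d /\ way_below le d x) /\
                      directed le D /\ is_sup le D x.

Lemma basis_sub {P : Type} (le : P -> P -> Prop) (B B' : P -> Prop) :
  (forall b, B b -> B' b) -> basis le B -> basis le B'.
Proof.
  intros HBB' HB x; destruct (HB x) as [D [HD HDx]].
  exists D; split; auto; intros d Dd; destruct (HD d Dd); auto.
Qed.

Section WayBelow.

Variables (P : Type) (le : P -> P -> Prop).
Hypothesis le_po : partial_order le.

Lemma way_below_le x y : way_below le x y -> le x y.
Proof.
  destruct le_po as [Hr [Ht _]]; intros Hxy.
  destruct (Hxy (fun z => z = y) y) as [z [-> Hxz]]; auto.
  - split; [exists y; auto|]; intros a b -> ->; exists y; auto.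
  - split; [intros z ->; auto|intros u Hu; auto].
Qed.

Lemma way_below_mono a b c d :
  le a b -> way_below le b c -> le c d -> way_below le a d.
Proof.
  destruct le_po as [_ [Ht _]]; intros Hab Hbc Hcd D s HD Hs Hds.
  destruct (Hbc D s HD Hs (Ht _ _ _ Hcd Hds)) as [z [Hz Hbz]]; eauto.
Qed.

Lemma is_sup_unique D s s' : is_sup le D s -> is_sup le D s' -> s = s'.
Proof. destruct le_po as [_ [_ Ha]]; intros [H1 H2] [H3 H4]; apply Ha; auto. Qed.

Variable B : P -> Prop.
Hypothesis B_basis : basis le B.

Lemma approximant x :
  exists D, (forall z, D z -> way_below le z x) /\ directed le D /\ is_sup le D x.
Proof.
  destruct (B_basis x) as [D [HD HDx]]; exists D; split; auto.
  intros z Dz; apply HD, Dz.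
Qed.

(* The elements way below some member of [D] form a directed set with supremum [s]. *)
Lemma way_below_sup D s b :
  directed le D -> is_sup le D s -> way_below le b s -> exists d, D d /\ way_below le b d.
Proof.
  intros HD Hs Hb; pose proof le_po as [Hr [Ht _]].
  set (D' := fun a => exists d, D d /\ way_below le a d).
  assert (HD' : directed le D').
  { split.
    - destruct HD as [[d Hd] _]; destruct (approximant d) as [Dd [HDd [[[a Ha] _] _]]].
      exists a, d; auto.
    - intros a1 a2 [d1 [Hd1 W1]] [d2 [Hd2 W2]].
      destruct (proj2 HD d1 d2 Hd1 Hd2) as [d3 [Hd3 [L1 L2]]].
      destruct (approximant d3) as [Dd [HDd [Hdir Hsup]]].
      destruct (way_below_mono _ _ _ _ (Hr a1) W1 L1 Dd d3 Hdir Hsup (Hr _)) as [c1 [Hc1 M1]].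
      destruct (way_below_mono _ _ _ _ (Hr a2) W2 L2 Dd d3 Hdir Hsup (Hr _)) as [c2 [Hc2 M2]].
      destruct (proj2 Hdir c1 c2 Hc1 Hc2) as [c [Hc [N1 N2]]].
      exists c; split; [exists d3; auto|split; eauto]. }
  assert (Hs' : is_sup le D' s).
  { split.
    - intros a [d [Hd W]]; apply Ht with d; [apply way_below_le, W|apply Hs, Hd].
    - intros u Hu; apply Hs; intros d Hd.
      destruct (approximant d) as [Dd [HDd [_ Hsup]]].
      apply Hsup; intros z Hz; apply Hu; exists d; auto. }
  destruct (Hb D' s HD' Hs' (Hr _)) as [a [[d [Hd W]] Hba]].
  exists d; split; auto; eapply way_below_mono; eauto.
Qed.

Lemma noncompact_escape bi bj x :
  way_below le bi x -> way_below le bj x -> ~ compact_el le x ->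
  exists b, B b /\ way_below le bi b /\ way_below le bj b /\ way_below le b x /\ ~ le b bi.
Proof.
  intros Wi Wj Hnc; pose proof le_po as [Hr [Ht Ha]].
  destruct (B_basis x) as [D [HDB [HD Hs]]].
  assert (HDw : forall d, D d -> way_below le d x) by (intros d Dd; apply HDB, Dd).
  destruct (way_below_sup D x bi HD Hs Wi) as [d1 [Hd1 W1]].
  destruct (way_below_sup D x bj HD Hs Wj) as [d2 [Hd2 W2]].
  assert (Hd3 : exists d3, D d3 /\ ~ le d3 bi).
  { apply NNPP; intros Hn; apply Hnc.
    assert (Hx : x = bi).
    { apply Ha; [|apply way_below_le, Wi].
      apply Hs; intros d Hd; apply NNPP; intros Hnd; apply Hn; eauto. }
    rewrite Hx in Wi |- *; exact Wi. }
  destruct Hd3 as [d3 [Hd3 N3]].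
  destruct (proj2 HD d1 d2 Hd1 Hd2) as [d12 [Hd12 [L1 L2]]].
  destruct (proj2 HD d12 d3 Hd12 Hd3) as [b [Hb [L12 L3]]].
  exists b; split; [apply HDB, Hb|]; split; [|split; [|split]].
  - eapply way_below_mono; eauto.
  - eapply way_below_mono; eauto.
  - apply HDw, Hb.
  - intros Hle; apply N3; eauto.
Qed.

End WayBelow.

(** * The code quasi-metric on an omega-continuous domain *)

Section CodeDistance.

Variables (P : Type) (le : P -> P -> Prop).
Hypothesis le_po : partial_order le.
Variable e : nat -> option P.
Hypothesis e_basis : basis le (fun b => exists n, e n = Some b).

Definition basic (n : nat) (p : P) : Prop := exists b, e n = Some b /\ way_below le b p.

(* A code [c] names a set of basis indices: [(0, n)] names [{n}], [(1, _)] names all of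
   them, and [(i + 2, j)] names the indices of basis elements above [e i] and [e j] in the
   way-below order but not below [e i]. *)
Definition code_set (c l : nat) : Prop :=
  match Cantor.of_nat c with
  | (0, n) => l = n
  | (1, _) => True
  | (S (S i), j) => exists bi bj bl, e i = Some bi /\ e j = Some bj /\ e l = Some bl /\
       way_below le bi bl /\ way_below le bj bl /\ ~ le bl bi
  end.

Definition hits_before (c : nat) (p q : P) : Prop :=
  exists l, code_set c l /\ basic l p /\
    forall l', (l' <= l)%nat -> code_set c l' -> ~ basic l' q.

Definition code_dist (p q : P) : R := dyadic_inf (fun c => hits_before c p q).

Definition code_single (n : nat) : nat := Cantor.to_nat (0%nat, n).
Definition code_all : nat := Cantor.to_nat (1%nat, 0%nat).
Definition code_escape (i j : nat) : nat := Cantor.to_nat (S (S i), j).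

Lemma code_set_single n l : code_set (code_single n) l <-> l = n.
Proof. unfold code_set, code_single; rewrite Cantor.cancel_of_to; tauto. Qed.

Lemma code_set_all l : code_set code_all l.
Proof. unfold code_set, code_all; rewrite Cantor.cancel_of_to; exact I. Qed.

Lemma code_set_escape i j l : code_set (code_escape i j) l <->
  exists bi bj bl, e i = Some bi /\ e j = Some bj /\ e l = Some bl /\
    way_below le bi bl /\ way_below le bj bl /\ ~ le bl bi.
Proof. unfold code_set, code_escape; rewrite Cantor.cancel_of_to; tauto. Qed.

Lemma basic_mono n p q : basic n p -> le p q -> basic n q.
Proof.
  intros [b [Hb W]] Hpq; exists b; split; auto.
  eapply way_below_mono; eauto; apply le_po.
Qed.

Lemma basic_way_below n p b : basic n p -> e n = Some b -> way_below le b p.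
Proof. intros [b' [Hb' W]] Hb; rewrite Hb in Hb'; injection Hb' as ->; exact W. Qed.

Lemma basic_scott_open n : scott_open le (basic n).
Proof.
  split; [apply basic_mono|].
  intros D s HD Hs [b [Hb W]].
  destruct (way_below_sup P le le_po _ e_basis D s b HD Hs W) as [d [Hd W']].
  exists d; split; auto; exists b; auto.
Qed.

Lemma scott_open_basic_nbhd V p :
  scott_open le V -> V p -> exists n, basic n p /\ forall q, basic n q -> V q.
Proof.
  intros [Vup Vin] Vp; destruct (e_basis p) as [D [HD [Hdir Hs]]].
  destruct (Vin D p Hdir Hs Vp) as [b [Db Vb]]; destruct (HD b Db) as [[n Hn] Wb].
  exists n; split; [exists b; auto|].
  intros q Hq; apply (Vup b); auto; apply (way_below_le P le le_po), (basic_way_below n); auto.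
Qed.

Lemma le_of_basic p q : (forall n, basic n p -> basic n q) -> le p q.
Proof.
  intros H; destruct (e_basis p) as [D [HD [_ [_ Hs]]]]; apply Hs; intros b Db.
  destruct (HD b Db) as [[n Hn] Wb].
  apply (way_below_le P le le_po), (basic_way_below n); auto.
  apply H; exists b; auto.
Qed.

Lemma hits_before_irrefl c p : ~ hits_before c p p.
Proof. intros [l [Wl [Hl H]]]; exact (H l (le_n l) Wl Hl). Qed.

Lemma hits_before_cotrans c p q r :
  hits_before c p r -> hits_before c p q \/ hits_before c q r.
Proof.
  intros [l [Wl [Hl H]]]; destruct (classic (hits_before c p q)) as [Hq|Hq]; auto.
  right; assert (Hex : exists l', (l' <= l)%nat /\ code_set c l' /\ basic l' q).
  { apply NNPP; intros Hn; apply Hq; exists l; split; auto; split; auto.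
    intros l' H1 H2 H3; apply Hn; eauto. }
  destruct Hex as [l' [H1 [H2 H3]]]; exists l'; split; auto; split; auto.
  intros l'' H4 H5; apply H; auto; lia.
Qed.

Lemma hits_before_antitone c p q q' : hits_before c p q' -> le q q' -> hits_before c p q.
Proof.
  intros [l [Wl [Hl H]]] Hqq'; exists l; split; auto; split; auto.
  intros l' H1 H2 H3; apply (H l' H1 H2); eapply basic_mono; eauto.
Qed.

Lemma basic_of_not_hits_before_single n p q :
  ~ hits_before (code_single n) p q -> basic n p -> basic n q.
Proof.
  intros Hn Hp; apply NNPP; intros Hq; apply Hn; exists n.
  split; [apply code_set_single; auto|]; split; auto.
  intros l' _ Hl'; apply code_set_single in Hl'; subst; auto.
Qed.

Lemma code_dist_ge0 p q : 0 <= code_dist p q.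
Proof. apply dyadic_inf_ge0. Qed.

Lemma code_dist_self p : code_dist p p = 0.
Proof. apply dyadic_inf_eq0; intros c; apply hits_before_irrefl. Qed.

Lemma code_dist_triangle : triangle_ineq code_dist.
Proof.
  intros p q r; pose proof (code_dist_ge0 p q); pose proof (code_dist_ge0 q r).
  eapply Rle_trans; [apply (dyadic_inf_le_max _ (fun c => hits_before c p q));
    intros c; apply hits_before_cotrans|].
  apply Rmax_lub; unfold code_dist in *; lra.
Qed.

Lemma le_of_code_dist_eq0 p q : code_dist p q = 0 -> le p q.
Proof.
  intros H; apply le_of_basic; intros n.
  apply basic_of_not_hits_before_single, (proj1 (dyadic_inf_eq0 _) H).
Qed.

Lemma code_dist_antitone p q q' : le q q' -> code_dist p q' <= code_dist p q.
Proof.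
  intros Hqq'; unfold code_dist at 1.
  destruct (dyadic_infP (fun c => hits_before c p q')) as [[c [Hc [_ ->]]]|[_ ->]].
  - apply dyadic_inf_ge; eapply hits_before_antitone; eauto.
  - apply code_dist_ge0.
Qed.

Lemma not_hits_before_sup c p D s :
  directed le D -> is_sup le D s -> ~ hits_before c p s ->
  exists d, D d /\ ~ hits_before c p d.
Proof.
  intros HD Hs Hns; destruct (proj1 HD) as [d0 Hd0].
  destruct (classic (exists l, code_set c l /\ basic l p)) as [Hex|Hnex].
  2:{ exists d0; split; auto; intros [l [Wl [Hl _]]]; eauto. }
  destruct (nat_least _ Hex) as [l0 [[W0 H0] Hmin]].
  assert (Hs' : exists l', (l' <= l0)%nat /\ code_set c l' /\ basic l' s).
  { apply NNPP; intros Hn; apply Hns; exists l0; split; auto; split; auto.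
    intros l' H1 H2 H3; apply Hn; eauto. }
  destruct Hs' as [l' [Hl'0 [Wl' Hl']]].
  destruct (proj2 (basic_scott_open l') D s HD Hs Hl') as [d [Dd Hd]].
  exists d; split; auto; intros [l [Wl [Hl Hnot]]].
  apply (Hnot l'); auto; specialize (Hmin l (conj Wl Hl)); lia.
Qed.

Lemma not_hits_before_sup_upto p D s (A : nat -> Prop) K :
  directed le D -> is_sup le D s ->
  (forall c, (c <= K)%nat -> A c -> ~ hits_before c p s) ->
  exists d, D d /\ forall c, (c <= K)%nat -> A c -> ~ hits_before c p d.
Proof.
  intros HD Hs; induction K as [|K IH]; intros HA.
  - destruct (classic (A 0%nat)) as [A0|nA0].
    + destruct (not_hits_before_sup 0 p D s HD Hs (HA 0%nat (le_n 0) A0)) as [d [Dd Hd]].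
      exists d; split; auto; intros c Hc _; replace c with 0%nat by lia; exact Hd.
    + destruct (proj1 HD) as [d Dd]; exists d; split; auto.
      intros c Hc Ac; replace c with 0%nat in Ac by lia; contradiction.
  - destruct IH as [d1 [Dd1 H1]]; [intros c Hc; apply HA; lia|].
    destruct (classic (A (S K))) as [AS|nAS].
    + destruct (not_hits_before_sup (S K) p D s HD Hs (HA _ (le_n _) AS)) as [d2 [Dd2 H2]].
      destruct (proj2 HD d1 d2 Dd1 Dd2) as [d [Dd [L1 L2]]]; exists d; split; auto.
      intros c Hc Ac Hcd; destruct (Nat.eq_dec c (S K)) as [->|Hne].
      * apply H2; eapply hits_before_antitone; eauto.
      * apply (H1 c); [lia|auto|]; eapply hits_before_antitone; eauto.
    + exists d1; split; auto; intros c Hc Ac.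
      destruct (Nat.eq_dec c (S K)) as [->|Hne]; [contradiction|apply H1; auto; lia].
Qed.

Lemma code_ball_scott_open p eps : scott_open le (fun q => code_dist p q < eps).
Proof.
  split.
  - intros q q' Hq Hqq'; pose proof (code_dist_antitone p q q' Hqq'); lra.
  - intros D s HD Hs Hps.
    assert (Heps : 0 < eps) by (pose proof (code_dist_ge0 p s); lra).
    destruct (dyadic_small eps Heps) as [K HK].
    assert (HA : forall c, eps <= dyadic c -> (c <= K)%nat).
    { intros c Hc; destruct (Nat.le_gt_cases c K) as [|Hlt]; auto.
      pose proof (dyadic_lt K c Hlt); lra. }
    destruct (not_hits_before_sup_upto p D s (fun c => eps <= dyadic c) K HD Hs)
      as [d [Dd Hd]].
    { intros c _ Hc Hcs; pose proof (dyadic_inf_ge (fun c => hits_before c p s) c Hcs).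
      unfold code_dist in Hps; lra. }
    exists d; split; auto; apply dyadic_inf_lt; auto; intros c Hc.
    apply Rnot_le_lt; intros Hec; exact (Hd c (HA c Hec) Hec Hc).
Qed.

Lemma scott_open_code_ball V p :
  scott_open le V -> V p -> exists eps, 0 < eps /\ forall q, code_dist p q < eps -> V q.
Proof.
  intros HV Vp; destruct (scott_open_basic_nbhd V p HV Vp) as [n [Hn HnV]].
  exists (dyadic (code_single n)); split; [apply dyadic_pos|].
  intros q Hq; apply HnV, (basic_of_not_hits_before_single n p); auto.
  intros Hc; pose proof (dyadic_inf_ge (fun c => hits_before c p q) _ Hc).
  unfold code_dist in Hq; lra.
Qed.

Section CauchyLimit.

Variable ps : nat -> P.
Hypothesis ps_noncompact : forall m, ~ compact_el le (ps m).
Hypothesis ps_cauchy : forall c, exists n0, forall n m,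
  (n0 <= n)%nat -> (n <= m)%nat -> ~ hits_before c (ps n) (ps m).

Lemma first_hit_stable c :
  (exists N, forall m, (N <= m)%nat -> forall l, code_set c l -> ~ basic l (ps m)) \/
  (exists l N, code_set c l /\ forall m, (N <= m)%nat ->
     basic l (ps m) /\ forall l', code_set c l' -> basic l' (ps m) -> (l <= l')%nat).
Proof.
  destruct (ps_cauchy c) as [n0 Hn0].
  destruct (classic (exists l m, (n0 <= m)%nat /\ code_set c l /\ basic l (ps m)))
    as [Hex|Hnex].
  - right; destruct (nat_least _ Hex) as [l [[m1 [Hm1 [Wl Hl]]] Hmin]].
    assert (Hmin' : forall m l', (n0 <= m)%nat -> code_set c l' -> basic l' (ps m) ->
      (l <= l')%nat) by eauto.
    exists l, m1; split; auto; intros m Hm; split; [|eauto with arith].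
    assert (Hex' : exists l', (l' <= l)%nat /\ code_set c l' /\ basic l' (ps m)).
    { apply NNPP; intros Hn; apply (Hn0 m1 m); auto.
      exists l; split; auto; split; auto; intros l' H1 H2 H3; apply Hn; eauto. }
    destruct Hex' as [l' [Hl' [Wl' Bl']]].
    replace l with l'; auto; specialize (Hmin' m l' ltac:(lia) Wl' Bl'); lia.
  - left; exists n0; intros m Hm l Wl Hl; apply Hnex; eauto.
Qed.

Definition eventually_below (b : P) : Prop :=
  (exists n, e n = Some b) /\ exists N, forall m, (N <= m)%nat -> way_below le b (ps m).

Lemma eventually_below_escape i j bi bj :
  e i = Some bi -> e j = Some bj -> eventually_below bi -> eventually_below bj ->
  exists b, eventually_below b /\ way_below le bi b /\ way_below le bj b /\ ~ le b bi.
Proof.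
  intros Hi Hj [_ [Ni Hni]] [_ [Nj Hnj]].
  destruct (first_hit_stable (code_escape i j)) as [[N HN]|[l [N [Wl Hl]]]].
  - exfalso; set (m := Nat.max N (Nat.max Ni Nj)).
    destruct (noncompact_escape P le le_po _ e_basis bi bj (ps m))
      as [b [[l Hl] [W1 [W2 [W3 N4]]]]]; [apply Hni; lia|apply Hnj; lia|auto|].
    apply (HN m ltac:(lia) l); [apply code_set_escape; exists bi, bj, b; tauto|].
    exists b; auto.
  - apply code_set_escape in Wl.
    destruct Wl as [bi' [bj' [b [Hi' [Hj' [Hb [W1 [W2 N3]]]]]]]].
    rewrite Hi in Hi'; injection Hi' as <-; rewrite Hj in Hj'; injection Hj' as <-.
    exists b; split; [split; [eauto|exists N]|auto].
    intros m Hm; apply (basic_way_below l); auto; apply Hl, Hm.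
Qed.

Lemma eventually_below_directed : directed le eventually_below.
Proof.
  split.
  - destruct (first_hit_stable code_all) as [[N HN]|[l [N [_ Hl]]]].
    + exfalso; destruct (e_basis (ps N)) as [D [HD [[[b Db] _] _]]].
      destruct (HD b Db) as [[l Hl] Wb].
      apply (HN N (le_n N) l (code_set_all l)); exists b; auto.
    + destruct (proj1 (Hl N (le_n N))) as [b [Hb _]].
      exists b; split; [eauto|exists N].
      intros m Hm; apply (basic_way_below l); auto; apply Hl, Hm.
  - intros a b Ha Hb; pose proof Ha as [[i Hi] _]; pose proof Hb as [[j Hj] _].
    destruct (eventually_below_escape i j a b Hi Hj Ha Hb) as [c [Hc [Wa [Wb _]]]].
    exists c; split; auto; split; apply (way_below_le P le le_po); auto.
Qed.

Variable x : P.
Hypothesis x_sup : is_sup le eventually_below x.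

Lemma eventually_below_way_below b : eventually_below b -> way_below le b x.
Proof.
  intros Hb; pose proof Hb as [[i Hi] _].
  destruct (eventually_below_escape i i b b Hi Hi Hb Hb) as [c [Hc [Wb _]]].
  eapply way_below_mono; eauto; [apply le_po|apply x_sup, Hc].
Qed.

Lemma way_below_limit b :
  way_below le b x -> exists N, forall m, (N <= m)%nat -> way_below le b (ps m).
Proof.
  intros Wb; destruct (Wb _ x eventually_below_directed x_sup (proj1 le_po x))
    as [a [[_ [N HN]] Hba]].
  exists N; intros m Hm; eapply way_below_mono; eauto; apply le_po.
Qed.

Lemma basic_limit l :
  basic l x <-> exists N, forall m, (N <= m)%nat -> basic l (ps m).
Proof.
  split.
  - intros [b [Hl Wb]]; destruct (way_below_limit b Wb) as [N HN].
    exists N; intros m Hm; exists b; auto.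
  - intros [N HN]; destruct (HN N (le_n N)) as [b [Hl _]]; exists b; split; auto.
    apply eventually_below_way_below; split; [eauto|exists N].
    intros m Hm; apply (basic_way_below l); auto.
Qed.

Lemma limit_noncompact : ~ compact_el le x.
Proof.
  intros Hx; destruct (Hx _ x eventually_below_directed x_sup (proj1 le_po x))
    as [b [Hb Hxb]].
  assert (Ebx : b = x) by (apply (proj2 (proj2 le_po)); auto; apply x_sup, Hb).
  pose proof Hb as [[i Hi] _].
  destruct (eventually_below_escape i i b b Hi Hi Hb Hb) as [c [Hc [_ [_ Ncb]]]].
  apply Ncb; rewrite Ebx; apply x_sup, Hc.
Qed.

Lemma limit_not_hits_before c :
  exists N, forall n, (N <= n)%nat -> ~ hits_before c x (ps n).
Proof.
  destruct (classic (exists l, code_set c l /\ basic l x)) as [Hex|Hnex].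
  - destruct (nat_least _ Hex) as [l0 [[W0 H0] Hmin]].
    destruct (proj1 (basic_limit l0) H0) as [N HN]; exists N.
    intros n Hn [l [Wl [Hl Hnot]]]; apply (Hnot l0); auto.
  - exists 0%nat; intros n _ [l [Wl [Hl _]]]; eauto.
Qed.

Lemma not_hits_before_limit c :
  exists N, forall n, (N <= n)%nat -> ~ hits_before c (ps n) x.
Proof.
  destruct (first_hit_stable c) as [[N HN]|[l [N [Wl Hl]]]].
  - exists N; intros n Hn [l [Wl [Hln _]]]; exact (HN n Hn l Wl Hln).
  - assert (Hlx : basic l x) by (apply basic_limit; exists N; apply Hl).
    exists N; intros n Hn [l' [Wl' [Hl' Hnot]]].
    exact (Hnot l (proj2 (Hl n Hn) l' Wl' Hl') Wl Hlx).
Qed.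

Lemma code_dist_limit eps : 0 < eps ->
  exists N, forall n, (N <= n)%nat -> code_dist x (ps n) < eps /\ code_dist (ps n) x < eps.
Proof.
  intros Heps; destruct (dyadic_small eps Heps) as [K HK].
  destruct (eventually_upto
    (fun c n => ~ hits_before c x (ps n) /\ ~ hits_before c (ps n) x)) with (K := K)
    as [N HN].
  { intros c; destruct (limit_not_hits_before c) as [N1 H1].
    destruct (not_hits_before_limit c) as [N2 H2].
    exists (Nat.max N1 N2); intros n Hn; split; [apply H1|apply H2]; lia. }
  pose proof (dyadic_le K (S K) (le_S _ _ (le_n K))).
  exists N; intros n Hn; split; (eapply Rle_lt_trans; [apply (dyadic_inf_le_lower _ K)|lra]);
    intros c Hc; destruct (Nat.le_gt_cases c K) as [Hck|]; auto;
    exfalso; destruct (HN n Hn c Hck); contradiction.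
Qed.

End CauchyLimit.

Section NoncompactSubspace.

Variables (T : Type) (O : (T -> Prop) -> Prop) (f : T -> P).
Hypothesis f_inj : forall x y, f x = f y -> x = y.
Hypothesis f_noncompact : forall x, ~ compact_el le (f x).
Hypothesis f_onto : forall p, ~ compact_el le p -> exists x, f x = p.
Hypothesis O_top : is_topology O.
Hypothesis O_scott : forall U, O U <-> exists V, scott_open le V /\ forall x, U x <-> V (f x).

Let d (x y : T) : R := code_dist (f x) (f y).

Lemma subspace_countably_based : countably_based O.
Proof.
  exists (fun n x => basic n (f x)); split.
  - intros n; apply O_scott; exists (basic n); split; [apply basic_scott_open|tauto].
  - intros U HU x Ux; apply O_scott in HU; destruct HU as [V [HV HUV]].
    apply HUV in Ux; destruct (scott_open_basic_nbhd V (f x) HV Ux) as [n [Hn HnV]].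
    exists n; split; auto; intros y Hy; apply HUV, HnV, Hy.
Qed.

Lemma subspace_quasi_metric : quasi_metric d.
Proof.
  split; [|split]; [intros; apply code_dist_ge0| |intros x y z; apply code_dist_triangle].
  intros x y; split; [intros ->; unfold d; rewrite code_dist_self; auto|].
  intros [H1 H2]; apply f_inj, (proj2 (proj2 le_po)); apply le_of_code_dist_eq0; auto.
Qed.

Lemma subspace_topology U : O U <-> qm_topology d U.
Proof.
  split.
  - intros HU; apply O_scott in HU; destruct HU as [V [HV HUV]].
    apply qm_open_of_balls; [intros x; apply code_dist_self|].
    intros x Ux; apply HUV in Ux.
    destruct (scott_open_code_ball V (f x) HV Ux) as [eps [Heps Hball]].
    exists eps; split; auto; intros y Hy; apply HUV, Hball, Hy.
  - intros HU; apply HU; auto.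
    intros V [x [eps Hball]]; apply O_scott.
    exists (fun q => code_dist (f x) q < eps); split; [apply code_ball_scott_open|apply Hball].
Qed.

Hypothesis le_dcpo : forall D, directed le D -> exists s, is_sup le D s.

Lemma subspace_complete : complete_qm d.
Proof.
  intros xs Hxs; set (ps := fun m => f (xs m)).
  assert (ps_noncompact : forall m, ~ compact_el le (ps m)) by (intros m; apply f_noncompact).
  assert (ps_cauchy : forall c, exists n0, forall n m,
    (n0 <= n)%nat -> (n <= m)%nat -> ~ hits_before c (ps n) (ps m)).
  { intros c; destruct (Hxs (dyadic c) (dyadic_pos c)) as [n0 Hn0].
    exists n0; intros n m Hn Hm Hc; specialize (Hn0 n m Hn Hm).
    pose proof (dyadic_inf_ge (fun c => hits_before c (ps n) (ps m)) c Hc).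
    unfold d, code_dist, ps in *; lra. }
  destruct (le_dcpo _ (eventually_below_directed ps ps_noncompact ps_cauchy)) as [p Hp].
  destruct (f_onto p (limit_noncompact ps ps_noncompact ps_cauchy p Hp)) as [x <-].
  exists x; apply converges_dhat; [intros ? ? ?; apply code_dist_triangle|].
  intros eps Heps.
  destruct (code_dist_limit ps ps_noncompact ps_cauchy (f x) Hp eps Heps) as [N HN].
  exists N; intros n Hn; destruct (HN n Hn); apply Rmax_lub_lt; auto.
Qed.

Lemma subspace_quasi_Polish : quasi_Polish O.
Proof.
  split; [exact subspace_countably_based|].
  exists d; split; [exact subspace_quasi_metric|split; [exact subspace_complete|]].
  exact subspace_topology.
Qed.

End NoncompactSubspace.

End CodeDistance.

Lemma noncompact_subspace_quasi_Polish (T P : Type) (O : (T -> Prop) -> Prop)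
  (le : P -> P -> Prop) :
  is_topology O -> omega_continuous le -> homeomorphic_to_noncompact O le -> quasi_Polish O.
Proof.
  intros HO [[Hpo Hdcpo] [B [[e He] HB]]] [f [Hinj [Hnc [Honto Htop]]]].
  exact (subspace_quasi_Polish P le Hpo e (basis_sub le B _ He HB) T O f
    Hinj Hnc Honto HO Htop Hdcpo).
Qed.

(** * Ideal completions and formal balls *)

Record Ideal {Q : Type} (prec : Q -> Q -> Prop) := mkIdeal {
  ip : Q -> Prop;
  ideal_inhabited : exists q, ip q;
  ideal_lower : forall q r, prec q r -> ip r -> ip q;
  ideal_directed : forall q r, ip q -> ip r -> exists s, ip s /\ prec q s /\ prec r s }.
Arguments ip {Q prec} _ _.
Arguments ideal_inhabited {Q prec} _.
Arguments ideal_lower {Q prec} _ _ _ _ _.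
Arguments ideal_directed {Q prec} _ _ _ _ _.

Section IdealCompletion.

Context {Q : Type} (prec : Q -> Q -> Prop).
Hypothesis prec_refl : forall q, prec q q.
Hypothesis prec_trans : forall a b c, prec a b -> prec b c -> prec a c.

Definition ideal_le (I J : Ideal prec) : Prop := forall q, ip I q -> ip J q.

Lemma ideal_ext (I J : Ideal prec) : (forall q, ip I q <-> ip J q) -> I = J.
Proof.
  destruct I as [p1 a1 b1 c1], J as [p2 a2 b2 c2]; simpl; intros H.
  assert (p1 = p2) by (apply pred_ext; auto); subst p2.
  f_equal; apply proof_irrelevance.
Qed.

Lemma ideal_le_po : partial_order ideal_le.
Proof.
  split; [|split].
  - intros I q; auto.
  - intros I J K H1 H2 q Hq; auto.
  - intros I J H1 H2; apply ideal_ext; intros q; split; auto.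
Qed.

Definition union_ideal (D : Ideal prec -> Prop) (HD : directed ideal_le D) : Ideal prec.
Proof.
  refine (mkIdeal Q prec (fun q => exists I, D I /\ ip I q) _ _ _).
  - destruct HD as [[I HI] _]; destruct (ideal_inhabited I) as [q Hq]; exists q, I; auto.
  - intros q r Hqr [I [HI Hr]]; exists I; split; auto; eapply ideal_lower; eauto.
  - intros q r [I1 [H1 Hq]] [I2 [H2 Hr]].
    destruct (proj2 HD I1 I2 H1 H2) as [I3 [H3 [L1 L2]]].
    destruct (ideal_directed I3 q r (L1 q Hq) (L2 r Hr)) as [s [Hs [A B]]].
    exists s; split; auto; exists I3; auto.
Defined.

Lemma union_ideal_sup D (HD : directed ideal_le D) : is_sup ideal_le D (union_ideal D HD).
Proof.
  split.
  - intros I HI q Hq; simpl; eauto.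
  - intros U HU q [I [HI Hq]]; apply (HU I HI), Hq.
Qed.

Lemma ip_sup D s :
  directed ideal_le D -> is_sup ideal_le D s -> forall q, ip s q <-> exists I, D I /\ ip I q.
Proof.
  intros HD Hs; rewrite (is_sup_unique _ _ ideal_le_po _ _ _ Hs (union_ideal_sup D HD)).
  simpl; tauto.
Qed.

Definition principal (q : Q) : Ideal prec.
Proof.
  refine (mkIdeal Q prec (fun r => prec r q) _ _ _).
  - exists q; auto.
  - intros a b H1 H2; eauto.
  - intros a b H1 H2; exists q; auto.
Defined.

Definition principals_below (J : Ideal prec) (K : Ideal prec) : Prop :=
  exists q, ip J q /\ K = principal q.

Lemma principals_below_directed J : directed ideal_le (principals_below J).
Proof.
  split.
  - destruct (ideal_inhabited J) as [q Hq]; exists (principal q), q; auto.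
  - intros A B [q [Hq ->]] [r [Hr ->]].
    destruct (ideal_directed J q r Hq Hr) as [s [Hs [H1 H2]]].
    exists (principal s); split; [exists s; auto|].
    split; intros x Hx; simpl in *; eauto.
Qed.

Lemma principals_below_sup J : is_sup ideal_le (principals_below J) J.
Proof.
  split.
  - intros K [q [Hq ->]] r Hr; simpl in Hr; eapply ideal_lower; eauto.
  - intros U HU q Hq; apply (HU (principal q)); [exists q; auto|simpl; auto].
Qed.

Lemma scott_open_principal_nbhd V J :
  scott_open ideal_le V -> V J -> exists q, ip J q /\ forall K, ip K q -> V K.
Proof.
  intros [Vup Vin] VJ.
  destruct (Vin _ J (principals_below_directed J) (principals_below_sup J) VJ)
    as [K [[q [Hq ->]] VK]].
  exists q; split; auto; intros K' HK'; apply (Vup _ _ VK).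
  intros r Hr; simpl in Hr; eapply ideal_lower; eauto.
Qed.

Lemma way_below_principal q J : way_below ideal_le (principal q) J <-> ip J q.
Proof.
  split.
  - intros W; destruct (W _ J (principals_below_directed J) (principals_below_sup J)
      (fun _ x => x)) as [K [[r [Hr ->]] Hle]].
    specialize (Hle q (prec_refl q)); simpl in Hle; eapply ideal_lower; eauto.
  - intros Hq D s HD Hs Hle; specialize (Hle q Hq).
    rewrite (ip_sup D s HD Hs) in Hle; destruct Hle as [I [HI Hq']].
    exists I; split; auto; intros r Hr; simpl in Hr; eapply ideal_lower; eauto.
Qed.

Lemma compact_ideal_iff J :
  compact_el ideal_le J <-> exists q, ip J q /\ forall r, ip J r -> prec r q.
Proof.
  split.
  - intros W; destruct (W _ J (principals_below_directed J) (principals_below_sup J)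
      (fun _ x => x)) as [K [[r [Hr ->]] Hle]].
    exists r; split; auto.
  - intros [q [Hq Hmax]].
    assert (HJ : J = principal q).
    { apply ideal_ext; intros r; split; [apply Hmax|intros Hr; exact (ideal_lower J r q Hr Hq)]. }
    rewrite HJ; apply way_below_principal; simpl; apply prec_refl.
Qed.

Lemma scott_open_generated (W : Q -> Prop) :
  scott_open ideal_le (fun J => exists q, ip J q /\ W q).
Proof.
  split.
  - intros I J [q [Hq Wq]] H; exists q; auto.
  - intros D s HD Hs [q [Hq Wq]]; rewrite (ip_sup D s HD Hs) in Hq.
    destruct Hq as [I [HI Hq]]; exists I; split; auto; exists q; auto.
Qed.

Lemma ideal_completion_omega_algebraic (enum : nat -> Q) :
  (forall q, exists n, enum n = q) -> omega_algebraic ideal_le.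
Proof.
  intros Henum; split.
  - split; [apply ideal_le_po|]; intros D HD; exists (union_ideal D HD); apply union_ideal_sup.
  - exists (fun K => exists q, K = principal q); split; [|split].
    + exists (fun n => Some (principal (enum n))); intros b [q ->].
      destruct (Henum q) as [n <-]; exists n; auto.
    + intros b [q ->]; apply way_below_principal; simpl; auto.
    + intros J; exists (principals_below J); split; [|split].
      * intros K [q [Hq ->]]; split; [exists q; auto|apply way_below_principal, Hq].
      * apply principals_below_directed.
      * apply principals_below_sup.
Qed.

End IdealCompletion.

Section FormalBalls.

Context {T : Type} (d : T -> T -> R).
Hypothesis d_qm : quasi_metric d.
Variable cent : nat -> T.
Hypothesis cent_dense : forall y k, exists i, d y (cent i) < dyadic k /\ d (cent i) y < dyadic k.

Let d_triangle : triangle_ineq d := proj2 (proj2 d_qm).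

Lemma dist_self x : d x x = 0.
Proof. apply (proj1 (proj1 (proj2 d_qm) x x) eq_refl). Qed.

(* A formal ball [(i, k)] has centre [cent i] and radius [2^-k]. *)
Definition ball_lt (q r : nat * nat) : Prop :=
  (snd q < snd r)%nat /\ d (cent (fst q)) (cent (fst r)) + dyadic (snd r) < dyadic (snd q).

Definition ball_le (q r : nat * nat) : Prop := q = r \/ ball_lt q r.

Definition in_ball (x : T) (q : nat * nat) : Prop := d (cent (fst q)) x < dyadic (snd q).

Lemma ball_le_refl q : ball_le q q.
Proof. left; reflexivity. Qed.

Lemma ball_lt_trans a b c : ball_lt a b -> ball_lt b c -> ball_lt a c.
Proof.
  intros [H1 H2] [H3 H4]; split; [lia|].
  pose proof (d_triangle (cent (fst a)) (cent (fst b)) (cent (fst c))); lra.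
Qed.

Lemma ball_le_lt_trans a b c : ball_le a b -> ball_lt b c -> ball_lt a c.
Proof. intros [->|H1] H2; [exact H2|eapply ball_lt_trans; eauto]. Qed.

Lemma ball_le_trans a b c : ball_le a b -> ball_le b c -> ball_le a c.
Proof. intros H1 [<-|H2]; [exact H1|right; eapply ball_le_lt_trans; eauto]. Qed.

Lemma in_ball_lower x q r : ball_le q r -> in_ball x r -> in_ball x q.
Proof.
  intros [->|[_ Hqr]] Hr; [exact Hr|unfold in_ball in *].
  pose proof (d_triangle (cent (fst q)) (cent (fst r)) x); lra.
Qed.

Lemma in_ball_refine x q1 q2 : in_ball x q1 -> in_ball x q2 ->
  exists r, in_ball x r /\ ball_lt q1 r /\ ball_lt q2 r.
Proof.
  unfold in_ball; intros H1 H2.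
  set (delta := Rmin (dyadic (snd q1) - d (cent (fst q1)) x)
                     (dyadic (snd q2) - d (cent (fst q2)) x)).
  assert (Hdel1 : delta <= dyadic (snd q1) - d (cent (fst q1)) x) by apply Rmin_l.
  assert (Hdel2 : delta <= dyadic (snd q2) - d (cent (fst q2)) x) by apply Rmin_r.
  assert (Hdel : 0 < delta) by (apply Rmin_glb_lt; lra).
  destruct (dyadic_small (delta / 2)) as [K HK]; [lra|].
  set (m := S (Nat.max K (Nat.max (snd q1) (snd q2)))).
  assert (Hm : dyadic m < delta / 2) by (eapply Rle_lt_trans; [apply dyadic_le|exact HK]; lia).
  destruct (cent_dense x m) as [j [Hj1 Hj2]].
  pose proof (d_triangle (cent (fst q1)) x (cent j)).
  pose proof (d_triangle (cent (fst q2)) x (cent j)).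
  exists (j, m); unfold ball_lt; simpl; split; [auto|split; split; [lia|lra|lia|lra]].
Qed.

Definition point_ideal (x : T) : Ideal ball_le.
Proof.
  refine (mkIdeal (nat * nat) ball_le (in_ball x) _ _ _).
  - destruct (cent_dense x 0) as [i [_ Hi]]; exists (i, 0%nat); exact Hi.
  - apply in_ball_lower.
  - intros q r Hq Hr; destruct (in_ball_refine x q r Hq Hr) as [s [Hs [A B]]].
    exists s; unfold ball_le; auto.
Defined.

Lemma point_ideal_noncompact x : ~ compact_el (ideal_le ball_le) (point_ideal x).
Proof.
  intros Hc; apply (compact_ideal_iff _ ball_le_refl ball_le_trans) in Hc.
  destruct Hc as [q [Hq Hmax]].
  destruct (in_ball_refine x q q Hq Hq) as [r [Hr [[A _] _]]].
  destruct (Hmax r Hr) as [E|[B _]]; [subst; lia|lia].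
Qed.

Lemma dist_eq0_of_in_ball x y : (forall q, in_ball x q -> in_ball y q) -> d x y = 0.
Proof.
  intros H; pose proof (proj1 d_qm x y).
  destruct (Rle_lt_dec (d x y) 0) as [Hle|Hlt]; [lra|exfalso].
  destruct (dyadic_small (d x y / 2)) as [k Hk]; [lra|].
  destruct (cent_dense x k) as [i [H1 H2]].
  specialize (H (i, k) H2); unfold in_ball in H; simpl in H.
  pose proof (d_triangle x (cent i) y); lra.
Qed.

Lemma point_ideal_inj x y : point_ideal x = point_ideal y -> x = y.
Proof.
  intros E; apply (proj1 (proj2 d_qm)); split; apply dist_eq0_of_in_ball; intros q Hq.
  - change (ip (point_ideal y) q); rewrite <- E; exact Hq.
  - change (ip (point_ideal x) q); rewrite E; exact Hq.
Qed.

Lemma point_ideal_scott U :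
  qm_topology d U <->
  exists V, scott_open (ideal_le ball_le) V /\ forall x, U x <-> V (point_ideal x).
Proof.
  split.
  - intros HU; exists (fun J => exists q, ip J q /\ forall x, in_ball x q -> U x).
    split; [apply scott_open_generated|intros x; simpl; split].
    + intros Ux; destruct (qm_open_ball _ d d_triangle U HU x Ux) as [eps [He Hb]].
      destruct (dyadic_small (eps / 2)) as [k Hk]; [lra|].
      destruct (cent_dense x k) as [i [H1 H2]]; exists (i, k); split; [exact H2|].
      intros z Hz; apply Hb; unfold in_ball in Hz; simpl in Hz.
      pose proof (d_triangle x (cent i) z); lra.
    + intros [q [Hq HqU]]; auto.
  - intros [V [HV HUV]]; apply qm_open_of_balls; [exact dist_self|].
    intros x Ux; apply HUV in Ux.
    destruct (scott_open_principal_nbhd _ ball_le_refl ball_le_trans V _ HV Ux) as [q [Hq HqV]].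
    exists (dyadic (snd q) - d (cent (fst q)) x); split; [simpl in Hq; unfold in_ball in Hq; lra|].
    intros y Hy; apply HUV, HqV; simpl; unfold in_ball in *.
    pose proof (d_triangle (cent (fst q)) x y); lra.
Qed.

Section NoncompactIdeal.

Variable J : Ideal ball_le.
Hypothesis J_noncompact : ~ compact_el (ideal_le ball_le) J.

Lemma noncompact_ideal_step q p :
  ip J q -> ip J p -> exists s, ip J s /\ ball_lt q s /\ ball_le p s.
Proof.
  intros Hq Hp.
  assert (Hr : exists r, ip J r /\ ~ ball_le r q).
  { apply NNPP; intros Hn; apply J_noncompact, (compact_ideal_iff _ ball_le_refl ball_le_trans).
    exists q; split; auto; intros r Hr; apply NNPP; intros Hnr; apply Hn; eauto. }
  destruct Hr as [r [Hr Hnr]].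
  destruct (ideal_directed J q r Hq Hr) as [s1 [Hs1 [A1 B1]]].
  destruct (ideal_directed J s1 p Hs1 Hp) as [s [Hs [A2 B2]]].
  exists s; split; auto; split; auto.
  destruct (ball_le_trans _ _ _ A1 A2) as [<-|L]; auto.
  exfalso; apply Hnr; eapply ball_le_trans; eauto.
Qed.

(* Cofinality comes from letting step [n] also dominate the [n]-th formal ball when it lies
   in [J]. *)
Lemma noncompact_ideal_chain : exists chain : nat -> nat * nat,
  (forall n, ip J (chain n)) /\ (forall n, ball_lt (chain n) (chain (S n))) /\
  (forall q, ip J q -> exists n, ball_le q (chain n)).
Proof.
  assert (Hnext : forall n q, exists s, ip J q ->
    ip J s /\ ball_lt q s /\ (ip J (Cantor.of_nat n) -> ball_le (Cantor.of_nat n) s)).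
  { intros n q; destruct (classic (ip J q)) as [Hq|Hq]; [|exists q; tauto].
    destruct (classic (ip J (Cantor.of_nat n))) as [Hp|Hp].
    - destruct (noncompact_ideal_step q _ Hq Hp) as [s Hs]; exists s; intros _; tauto.
    - destruct (noncompact_ideal_step q q Hq Hq) as [s Hs]; exists s; tauto. }
  destruct (constructive_indefinite_description _ (ideal_inhabited J)) as [q0 Hq0].
  set (next n q := proj1_sig (constructive_indefinite_description _ (Hnext n q))).
  assert (Hnext_spec : forall n q, ip J q -> ip J (next n q) /\ ball_lt q (next n q) /\
    (ip J (Cantor.of_nat n) -> ball_le (Cantor.of_nat n) (next n q))).
  { intros n q; unfold next; destruct constructive_indefinite_description as [s Hs]; auto. }
  set (chain := nat_rect (fun _ => (nat * nat)%type) q0 next).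
  assert (Hin : forall n, ip J (chain n)).
  { induction n as [|n IH]; [exact Hq0|apply (Hnext_spec n _ IH)]. }
  exists chain; split; [exact Hin|split; [intros n; apply (Hnext_spec n _ (Hin n))|]].
  intros q Hq; exists (S (Cantor.to_nat q)).
  rewrite <- (Cantor.cancel_of_to q) at 1.
  apply (Hnext_spec _ _ (Hin _)); rewrite Cantor.cancel_of_to; exact Hq.
Qed.

End NoncompactIdeal.

Hypothesis d_complete : complete_qm d.

Section BallChain.

Variable chain : nat -> nat * nat.
Hypothesis chain_lt : forall n, ball_lt (chain n) (chain (S n)).

Lemma chain_increasing n m : (n < m)%nat -> ball_lt (chain n) (chain m).
Proof.
  induction 1 as [|m _ IH]; [apply chain_lt|eapply ball_lt_trans; [exact IH|apply chain_lt]].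
Qed.

Lemma chain_level n : (n <= snd (chain n))%nat.
Proof. induction n as [|n IH]; [lia|destruct (chain_lt n); lia]. Qed.

Lemma chain_centre_dist n m :
  (n <= m)%nat -> d (cent (fst (chain n))) (cent (fst (chain m))) <= dyadic n.
Proof.
  intros Hnm; destruct (Nat.eq_dec n m) as [<-|Hne]; [rewrite dist_self; apply Rlt_le, dyadic_pos|].
  destruct (chain_increasing n m ltac:(lia)) as [_ H].
  pose proof (dyadic_pos (snd (chain m))); pose proof (dyadic_le _ _ (chain_level n)); lra.
Qed.

Lemma chain_limit : exists y,
  (forall m, d (cent (fst (chain m))) y <= dyadic (snd (chain m))) /\
  (forall eps, 0 < eps -> exists N, forall n, (N <= n)%nat -> d y (cent (fst (chain n))) < eps).
Proof.
  set (a n := cent (fst (chain n))).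
  destruct (d_complete a) as [y Hy].
  { intros eps Heps; destruct (dyadic_small eps Heps) as [K HK]; exists K.
    intros n m Hn Hm; pose proof (chain_centre_dist n m Hm).
    pose proof (dyadic_le K n Hn); unfold a; lra. }
  assert (Hconv : forall eps, 0 < eps -> exists N, forall n, (N <= n)%nat ->
    d y (a n) < eps /\ d (a n) y < eps).
  { intros eps Heps; destruct (Hy (fun z => dhat d y z < eps)) as [N HN].
    - apply generated_topology_sub; exists y, eps; tauto.
    - unfold dhat; rewrite dist_self, Rmax_left; lra.
    - exists N; intros n Hn; specialize (HN n Hn); unfold dhat in HN.
      pose proof (Rmax_l (d y (a n)) (d (a n) y)); pose proof (Rmax_r (d y (a n)) (d (a n) y)).
      lra. }
  exists y; split; [|intros eps Heps; destruct (Hconv eps Heps) as [N HN]; exists N; apply HN].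
  intros m; apply Rnot_lt_le; intros Hc.
  destruct (Hconv (d (a m) y - dyadic (snd (chain m)))) as [N HN]; [unfold a in *; lra|].
  set (n := Nat.max N (S m)).
  destruct (chain_increasing m n ltac:(lia)) as [_ B]; destruct (HN n ltac:(lia)) as [_ C].
  pose proof (d_triangle (a m) (a n) y); pose proof (dyadic_pos (snd (chain n))).
  unfold a in *; lra.
Qed.

End BallChain.

Lemma point_ideal_onto J :
  ~ compact_el (ideal_le ball_le) J -> exists y, point_ideal y = J.
Proof.
  intros HJ; destruct (noncompact_ideal_chain J HJ) as [chain [Hin [Hlt Hcof]]].
  destruct (chain_limit chain Hlt) as [y [Hbelow Hconv]].
  exists y; apply ideal_ext; intros q; simpl; unfold in_ball; split.
  - intros Hq; set (delta := dyadic (snd q) - d (cent (fst q)) y).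
    destruct (dyadic_small (delta / 2)) as [K HK]; [unfold delta; lra|].
    destruct (Hconv (delta / 2)) as [N HN]; [unfold delta; lra|].
    set (n := Nat.max N (S (Nat.max K (snd q)))).
    apply (ideal_lower J q (chain n)); [right; split|apply Hin].
    + pose proof (chain_level chain Hlt n); lia.
    + pose proof (dyadic_le K (snd (chain n)) ltac:(pose proof (chain_level chain Hlt n); lia)).
      pose proof (HN n ltac:(lia)).
      pose proof (d_triangle (cent (fst q)) y (cent (fst (chain n)))); unfold delta in *; lra.
  - intros Hq; destruct (Hcof q Hq) as [n Hn].
    destruct (ball_le_lt_trans _ _ _ Hn (Hlt n)) as [_ Hd].
    pose proof (Hbelow (S n)).
    pose proof (d_triangle (cent (fst q)) (cent (fst (chain (S n)))) y); lra.
Qed.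

End FormalBalls.

Lemma dense_centres_exist {T : Type} (O : (T -> Prop) -> Prop) (d : T -> T -> R) (x0 : T) :
  quasi_metric d -> (forall U, O U <-> qm_topology d U) -> countably_based O ->
  exists cent : nat -> T,
    forall y k, exists i, d y (cent i) < dyadic k /\ d (cent i) y < dyadic k.
Proof.
  intros Hd HOd [B [HB Hbase]].
  pose (fits n k a := B n a /\ forall z, B n z -> d a z < dyadic k).
  exists (fun c => let (n, k) := Cantor.of_nat c in
    match excluded_middle_informative (exists a, fits n k a) with
    | left H => proj1_sig (constructive_indefinite_description _ H)
    | right _ => x0
    end).
  intros y k.
  assert (Hball : O (fun z => d y z < dyadic k)).
  { apply HOd, generated_topology_sub; exists y, (dyadic k); tauto. }
  destruct (Hbase _ Hball y) as [n [Bny Hsub]].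
  { rewrite (dist_self d Hd); apply dyadic_pos. }
  exists (Cantor.to_nat (n, k)); rewrite Cantor.cancel_of_to.
  destruct excluded_middle_informative as [H|H].
  - destruct constructive_indefinite_description as [a [Ba Ha]]; simpl; split; auto.
  - exfalso; apply H; exists y; split; auto.
Qed.

Definition unit_le (_ _ : unit) : Prop := True.

Lemma unit_compact u : compact_el unit_le u.
Proof. intros D s [[[] Dd] _] _ _; exists tt; split; [exact Dd|exact I]. Qed.

Lemma unit_omega_algebraic : omega_algebraic unit_le.
Proof.
  assert (Htt : forall D, directed unit_le D -> D tt) by (intros D [[[] Dd] _]; exact Dd).
  split; [split|].
  - split; [intros; exact I|split; [intros; exact I|intros [] [] _ _; reflexivity]].
  - intros D _; exists tt; split; intros; exact I.
  - exists (fun _ => True); split; [|split].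
    + exists (fun _ => Some tt); intros [] _; exists 0%nat; reflexivity.
    + intros u _; apply unit_compact.
    + intros u; exists (fun _ => True); split; [intros b _; split; [exact I|]|].
      * destruct b, u; apply unit_compact.
      * split; [split; [exists tt; exact I|intros; exists tt; repeat split]|].
        split; intros; exact I.
Qed.

Lemma empty_noncompact_unit {T : Type} (O : (T -> Prop) -> Prop) :
  is_topology O -> (T -> False) -> homeomorphic_to_noncompact O unit_le.
Proof.
  intros HO Hempty; exists (fun _ => tt).
  split; [intros x; destruct (Hempty x)|split; [intros x; destruct (Hempty x)|split]].
  - intros p Hp; destruct (Hp (unit_compact p)).
  - intros U; split.
    + intros _; exists (fun _ => True); split.
      * split; [auto|intros D s [[p Dp] _] _ _; exists p; auto].
      * intros x; destruct (Hempty x).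
    + intros _; replace U with (fun x : T => exists V, (fun _ => False) V /\ V x).
      * apply HO; intros _ [].
      * apply pred_ext; intros x; destruct (Hempty x).
Qed.

Lemma quasi_Polish_noncompact_ideals {T : Type} (O : (T -> Prop) -> Prop) :
  is_topology O -> quasi_Polish O ->
  exists (P : Type) (le : P -> P -> Prop),
    omega_algebraic le /\ homeomorphic_to_noncompact O le.
Proof.
  intros HO [Hcb [d [Hd [Hcomp HOd]]]].
  destruct (classic (exists x0 : T, True)) as [[x0 _]|Hempty].
  2:{ exists unit, unit_le; split; [apply unit_omega_algebraic|].
      apply empty_noncompact_unit; eauto. }
  destruct (dense_centres_exist O d x0 Hd HOd Hcb) as [cent Hdense].
  exists (Ideal (ball_le d cent)), (ideal_le (ball_le d cent)); split.
  - apply (ideal_completion_omega_algebraic _ (ball_le_refl d cent)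
      (ball_le_trans d Hd cent) Cantor.of_nat).
    intros q; exists (Cantor.to_nat q); apply Cantor.cancel_of_to.
  - exists (point_ideal d Hd cent Hdense); split; [|split; [|split]].
    + apply point_ideal_inj.
    + apply point_ideal_noncompact.
    + apply point_ideal_onto, Hcomp.
    + intros U; rewrite HOd; apply point_ideal_scott.
Qed.

Theorem theorem53 (T : Type) (O : (T -> Prop) -> Prop) (HO : is_topology O) :
  (quasi_Polish O <->
     exists (P : Type) (le : P -> P -> Prop),
       omega_continuous le /\ homeomorphic_to_noncompact O le) /\
  (quasi_Polish O <->
     exists (P : Type) (le : P -> P -> Prop),
       omega_algebraic le /\ homeomorphic_to_noncompact O le).
Proof.
  assert (algebraic_continuous : forall (P : Type) (le : P -> P -> Prop),
    omega_algebraic le -> omega_continuous le).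
  { intros P le [Hdcpo [B [HBc [_ HB]]]]; split; [exact Hdcpo|exists B; auto]. }
  assert (to_domain := quasi_Polish_noncompact_ideals O HO).
  split; split.
  - intros HQ; destruct (to_domain HQ) as [P [le [Halg Hhom]]]; eauto.
  - intros [P [le [Hcont Hhom]]]; eapply noncompact_subspace_quasi_Polish; eauto.
  - exact to_domain.
  - intros [P [le [Halg Hhom]]]; eapply noncompact_subspace_quasi_Polish; eauto.
Qed.
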